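(* Let $\mathcal{C}$ be a connected simply connected Cartan scheme whose real roots form a finite root system, let $a$ be an object, $\Gamma^a$ its Dynkin diagram, and $i\in I$. (1) For $i_1,\dots,i_k\in I$, the induced subdiagram on $\{i,i_1,\dots,i_k\}$ is connected in $\Gamma^a$ if and only if it is connected in $\Gamma^{\rho_i(a)}$. Let $j,k\in I$ with $|\{i,j,k\}|=3$. (2) If $i$ is connected neither to $j$ nor to $k$ (in $\Gamma^a$), then the connection between $j$ and $k$, including labels, is the same in $\Gamma^a$ and $\Gamma^{\rho_i(a)}$, i.e. $c^a_{jk}=c^{\rho_i(a)}_{jk}$ and $c^a_{kj}=c^{\rho_i(a)}_{kj}$. (3) If $i$ is connected to $j$ and not connected to $k$, then $j$ and $k$ are connected in $\Gamma^a$ if and only if they are connected in $\Gamma^{\rho_i(a)}$.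
   Context: Cartan scheme $\mathcal{C}=(I,A,(\rho_i),(C^a))$: $A$ non-empty, involutions $\rho_i:A\to A$, generalized Cartan matrices $C^a=(c^a_{ij})$ ($c_{ii}=2$, $c_{ij}\le 0$ for $i\ne j$, $c_{ij}=0\Leftrightarrow c_{ji}=0$) with $c^a_{ij}=c^{\rho_i(a)}_{ij}$. Weyl groupoid generated by $\sigma_i^a:a\to\rho_i(a)$, $\sigma^a_i(\alpha_j)=\alpha_j-c^a_{ij}\alpha_i$ on $\mathbb{Z}^I$. Connected: all $\mathrm{Hom}(a,b)\neq\emptyset$; simply connected: $\mathrm{Hom}(a,a)=\{\mathrm{id}\}$. Real roots $R^a=\{w(\alpha_j): w\in\mathrm{Hom}(b,a)\}$, $R^a_+=R^a\cap\mathbb{N}_0^I$; finite root system: all $R^a$ finite, $R^a=R^a_+\cup-R^a_+$, $(\rho_i\rho_j)^{m^a_{ij}}(a)=a$ whenever $i\ne j$ and $m^a_{ij}=|R^a\cap(\mathbb{N}_0\alpha_i+\mathbb{N}_0\alpha_j)|<\infty$. The Dynkin diagram $\Gamma^a$ has vertex set $I$; distinct $i,j$ are connected iff $c^a_{ij}\ne0$, by an arrow to $i$ labelled $-c^a_{ij}$. *)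

From mathcomp Require Import all_boot all_order all_algebra.
Set Implicit Arguments. Unset Strict Implicit. Unset Printing Implicit Defensive.
Import Order.TTheory GRing.Theory Num.Theory.
Local Open Scope ring_scope.

Section CartanScheme.
Variables (I : finType) (A : Type).
Variable rho : I -> A -> A.
Variable C : A -> I -> I -> int.

Definition vec := {ffun I -> int}.

Definition alpha (j : I) : vec := [ffun k => (k == j)%:Z].

Definition cartan_scheme : Prop :=
  [/\ forall i, involutive (rho i),
      forall a i, C a i i = 2,
      forall a i j, i != j -> C a i j <= 0,
      forall a i j, (C a i j == 0) = (C a j i == 0)
    & forall a i j, C a i j = C (rho i a) i j].

(* sigma_i^a : a -> rho_i(a),  sigma_i^a(alpha_j) = alpha_j - c^a_{ij} alpha_i,
   extended Z-linearly *)
Definition sigma (a : A) (i : I) (v : vec) : vec :=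
  [ffun k => v k - (k == i)%:Z * \sum_(j : I) C a i j * v j].

(* A word s = [:: i1; i2; ...; in] starting at object b denotes the morphism
   sigma_{in} ... sigma_{i2}^{rho_{i1} b} sigma_{i1}^b : b -> walk b s.
   Every morphism of the Weyl groupoid is of this form. *)
Fixpoint walk (b : A) (s : seq I) : A :=
  if s is i :: s' then walk (rho i b) s' else b.

Fixpoint act (b : A) (s : seq I) (v : vec) : vec :=
  if s is i :: s' then act (rho i b) s' (sigma b i v) else v.

Definition cs_connected : Prop := forall a b : A, exists s, walk a s = b.

Definition cs_simply_connected : Prop :=
  forall (a : A) (s : seq I), walk a s = a -> forall v, act a s v = v.

Definition real_root (a : A) (v : vec) : Prop :=
  exists b s j, walk b s = a /\ act b s (alpha j) = v.

Definition nonneg (v : vec) : bool := [forall k, 0 <= v k].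

Definition neg_vec (v : vec) : vec := [ffun k => - v k].

Definition in_rank2_cone (i j : I) (v : vec) : bool :=
  nonneg v && [forall k, (k != i) ==> (k != j) ==> (v k == 0)].

Definition finite_root_system : Prop :=
  [/\
      forall a, exists l : seq vec, forall v, real_root a v -> v \in l,
      forall a v, real_root a v -> nonneg v \/ nonneg (neg_vec v)
    & (* (rho_i rho_j)^{m^a_{ij}}(a) = a, where m^a_{ij} is the number of
         elements of R^a \cap (N_0 alpha_i + N_0 alpha_j) (finite by the first
         axiom); l enumerates this set without repetition *)
      forall a i j, i != j ->
        forall l : seq vec, uniq l ->
          (forall v, v \in l <-> real_root a v /\ in_rank2_cone i j v) ->
          iter (size l) (fun b => rho i (rho j b)) a = a].

Definition dyn_adj (a : A) : rel I := fun i j => (i != j) && (C a i j != 0).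

Definition sub_connected (a : A) (S : {set I}) : bool :=
  [forall x in S, forall y in S,
     connect (fun u v => [&& u \in S, v \in S & dyn_adj a u v]) x y].

End CartanScheme.

From mathcomp Require Import all_boot all_order all_algebra.
From mathcomp Require Import zify ring.
Import Order.TTheory GRing.Theory Num.Theory.
Set Implicit Arguments. Unset Strict Implicit. Unset Printing Implicit Defensive.
Local Open Scope ring_scope.

(* Two facts about rank-two real roots carry the whole argument: for j != k,
   alpha_k - c^a_jk alpha_j is a real root at a (it is sigma_j applied to
   alpha_k), and if m alpha_j + alpha_k is a real root at a then
   m <= - c^a_jk, since otherwise sigma_j turns it into a root of mixed sign.
   If c_ij = c_ik = 0, then sigma_i fixes every root supported on {j, k}, so
   the bound transfers between a and rho_i(a) in both directions, which gives
   (2).  For (3), if c_jk vanishes at a but not at rho_i(a), carrying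
   alpha_j - c_kj alpha_k from rho_i(a) to a by sigma_i and then applying
   sigma_k gives a root of mixed sign.  For (1), each edge u -- v of the
   induced diagram at a either survives at rho_i(a) or is bypassed through i,
   which stays adjacent to the same vertices. *)

Section Comb3.
Variable I : finType.

Definition comb3 (p q r : I) (x y z : int) : vec I :=
  [ffun t => (t == p)%:Z * x + (t == q)%:Z * y + (t == r)%:Z * z].

Lemma sum_mul_delta (f : I -> int) (p : I) (x : int) :
  \sum_t f t * ((t == p)%:Z * x) = f p * x.
Proof.
rewrite (bigD1 p) //= big1 ?addr0; first by rewrite eqxx mul1r.
by move=> t /negbTE ->; rewrite mul0r mulr0.
Qed.

Lemma sum_mul_comb3 (f : I -> int) (p q r : I) (x y z : int) :
  \sum_t f t * comb3 p q r x y z t = f p * x + f q * y + f r * z.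
Proof.
under eq_bigr => t _ do rewrite ffunE !mulrDr.
by rewrite !big_split /= !sum_mul_delta.
Qed.

Lemma comb3_rot (p q r : I) (x y z : int) :
  comb3 p q r x y z = comb3 r p q z x y.
Proof. by apply/ffunP => t; rewrite !ffunE; ring. Qed.

Lemma alpha_comb3 (p q r : I) : alpha q = comb3 p q r 0 1 0.
Proof. by apply/ffunP => t; rewrite !ffunE; ring. Qed.

Lemma comb3_first (p q r : I) (x y z : int) :
  p != q -> p != r -> comb3 p q r x y z p = x.
Proof. by move=> /negbTE pq /negbTE pr; rewrite ffunE eqxx pq pr /=; ring. Qed.

Lemma comb3_second (p q r : I) (x y z : int) :
  p != q -> q != r -> comb3 p q r x y z q = y.
Proof.
by move=> pq /negbTE qr; rewrite ffunE eqxx eq_sym (negbTE pq) qr /=; ring.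
Qed.

Lemma sigma_comb3 (A : Type) (C : A -> I -> I -> int) (a : A)
    (p q r : I) (x y z : int) : p != q -> p != r ->
  sigma C a p (comb3 p q r x y z) =
  comb3 p q r (x - (C a p p * x + C a p q * y + C a p r * z)) y z.
Proof.
move=> /negbTE pq /negbTE pr; apply/ffunP => t.
rewrite !ffunE sum_mul_comb3; case: (eqVneq t p) => [->|_] /=.
  by rewrite pq pr; ring.
by ring.
Qed.

End Comb3.

Section ReflectionInvariance.
Variables (I : finType) (A : Type) (rho : I -> A -> A) (C : A -> I -> I -> int).
Hypothesis cartanC : cartan_scheme rho C.
Hypothesis real_root_sign : forall a v,
  real_root rho C a v -> nonneg v \/ nonneg (neg_vec v).

Local Notation root := (real_root rho C).
Local Notation adj := (dyn_adj C).

Lemma rhoK (i : I) : involutive (rho i).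
Proof. by case: cartanC. Qed.

Lemma cartan_diag (a : A) (i : I) : C a i i = 2.
Proof. by case: cartanC. Qed.

Lemma cartan_le0 (a : A) (i j : I) : i != j -> C a i j <= 0.
Proof. by case: cartanC => _ _ le0 _ _; apply: le0. Qed.

Lemma cartan_eq0C (a : A) (i j : I) : (C a i j == 0) = (C a j i == 0).
Proof. by case: cartanC. Qed.

Lemma cartan_rho (a : A) (i j : I) : C (rho i a) i j = C a i j.
Proof. by case: cartanC => _ _ _ _ <-. Qed.

Lemma walk_rcons (b : A) (s : seq I) (i : I) :
  walk rho b (rcons s i) = rho i (walk rho b s).
Proof. by elim: s b => //= j s IH b. Qed.

Lemma act_rcons (b : A) (s : seq I) (i : I) (v : vec I) :
  act rho C b (rcons s i) v = sigma C (walk rho b s) i (act rho C b s v).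
Proof. by elim: s b v => //= j s IH b v. Qed.

Lemma real_root_alpha (a : A) (j : I) : root a (alpha j).
Proof. by exists a, [::], j. Qed.

Lemma real_root_sigma (a : A) (i : I) (v : vec I) :
  root a v -> root (rho i a) (sigma C a i v).
Proof.
case=> b [s [j [<- <-]]]; exists b, (rcons s i), j.
by rewrite walk_rcons act_rcons.
Qed.

Lemma real_root_mixed_sign (a : A) (v : vec I) (p q : I) :
  root a v -> 0 < v p -> v q < 0 -> False.
Proof.
move=> /real_root_sign [] /forallP nonneg_v vp vq.
  by have := nonneg_v q; lia.
by have := nonneg_v p; rewrite ffunE; lia.
Qed.

(* The third index [r] of [comb3] only serves as a placeholder. *)
Lemma real_root_string_end (a : A) (j k r : I) : j != k -> j != r ->
  root a (comb3 j k r (- C a j k) 1 0).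
Proof.
move=> jk jr; have := real_root_sigma j (real_root_alpha (rho j a) k).
rewrite rhoK (alpha_comb3 j k r) sigma_comb3 // !cartan_rho cartan_diag.
by congr root; congr comb3; ring.
Qed.

Lemma real_root_string_bound (a : A) (j k r : I) (m : int) :
  j != k -> j != r -> k != r ->
  root a (comb3 j k r m 1 0) -> m <= - C a j k.
Proof.
move=> jk jr kr /(real_root_sigma j); rewrite sigma_comb3 // cartan_diag => R.
rewrite leNgt; apply/negP => m_gt.
apply: (real_root_mixed_sign R (p := k) (q := j)); first by rewrite comb3_second.
by rewrite comb3_first //; lia.
Qed.

Lemma cartan_orth_rho_le (a : A) (i j k : I) : i != j -> i != k -> j != k ->
  C a i j = 0 -> C a i k = 0 -> - C (rho i a) j k <= - C a j k.
Proof.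
move=> ij ik jk Cij Cik; have ji : j != i by rewrite eq_sym.
have := real_root_sigma i (real_root_string_end (rho i a) jk ji).
rewrite rhoK (comb3_rot j k i) sigma_comb3 // !cartan_rho Cij Cik.
rewrite mulr0 !mul0r !addr0.
rewrite -comb3_rot; apply: real_root_string_bound => //; by rewrite eq_sym.
Qed.

Lemma cartan_orth_rho (a : A) (i j k : I) : i != j -> i != k -> j != k ->
  C a i j = 0 -> C a i k = 0 -> C a j k = C (rho i a) j k.
Proof.
move=> ij ik jk Cij Cik.
have le1 := cartan_orth_rho_le ij ik jk Cij Cik.
have := @cartan_orth_rho_le (rho i a) i j k ij ik jk.
by rewrite rhoK !cartan_rho => /(_ Cij Cik); lia.
Qed.

Lemma cartan_rho_eq0 (a : A) (i j k : I) : i != j -> i != k -> j != k ->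
  C a i j != 0 -> C a i k = 0 -> C a j k = 0 -> C (rho i a) j k = 0.
Proof.
move=> ij ik jk Cij Cik Cjk; apply/eqP/negPn/negP => C'jk.
have kj : k != j by rewrite eq_sym.
have ki : k != i by rewrite eq_sym.
have C'kj : C (rho i a) k j != 0 by rewrite cartan_eq0C.
have C'kj_le0 := cartan_le0 (rho i a) kj.
have := real_root_sigma i (real_root_string_end (rho i a) kj ki).
rewrite rhoK (comb3_rot k j i) sigma_comb3 // -comb3_rot.
move=> /(real_root_sigma k); rewrite sigma_comb3 // cartan_diag.
have -> : C a k j = 0 by apply/eqP; rewrite cartan_eq0C Cjk.
have -> : C a k i = 0 by apply/eqP; rewrite cartan_eq0C Cik.
move=> R; apply: (real_root_mixed_sign R (p := j) (q := k)).
  by rewrite comb3_second // eq_sym.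
by rewrite comb3_first // !mul0r; lia.
Qed.

Lemma adjC (a : A) (u v : I) : adj a u v = adj a v u.
Proof. by rewrite /dyn_adj eq_sym cartan_eq0C. Qed.

Lemma adj_rho (a : A) (i v : I) : adj (rho i a) i v = adj a i v.
Proof. by rewrite /dyn_adj cartan_rho. Qed.

Lemma cartan_eq0_nadj (a : A) (i v : I) : i != v -> ~~ adj a i v -> C a i v = 0.
Proof. by rewrite /dyn_adj => -> /=; rewrite negbK => /eqP. Qed.

Lemma adj_rho_far (a : A) (i j k : I) : i != j -> i != k -> j != k ->
  adj a i j -> ~~ adj a i k -> (adj a j k <-> adj (rho i a) j k).
Proof.
move=> ij ik jk; rewrite /dyn_adj ij ik jk /= negbK => Cij /eqP Cik.
split=> adj_jk; apply: contra adj_jk => /eqP C_jk; apply/eqP.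
  by have := @cartan_rho_eq0 (rho i a) i j k; rewrite rhoK !cartan_rho; apply.
exact: cartan_rho_eq0.
Qed.

Lemma adj_connect_rho (a : A) (i : I) (S : {set I}) (u v : I) :
  i \in S -> u \in S -> v \in S -> adj a u v ->
  connect (fun x y => [&& x \in S, y \in S & adj (rho i a) x y]) u v.
Proof.
move=> iS uS vS uv_adj.
have edge x y : x \in S -> y \in S -> adj (rho i a) x y ->
    connect (fun x y => [&& x \in S, y \in S & adj (rho i a) x y]) x y.
  by move=> xS yS xy; apply: connect1; rewrite xS yS.
case: (eqVneq u i) => [eq_ui|ui]; first by subst u; apply: edge; rewrite ?adj_rho.
case: (eqVneq v i) => [eq_vi|vi].
  by subst v; apply: edge; rewrite // adjC adj_rho adjC.
have uv : u != v by case/andP: uv_adj.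
have iu : i != u by rewrite eq_sym.
have iv : i != v by rewrite eq_sym.
case iu_adj: (adj a i u); case iv_adj: (adj a i v).
- apply: (connect_trans (y := i)); apply: edge => //.
    by rewrite adjC adj_rho.
  by rewrite adj_rho.
- by apply: edge => //; rewrite -(adj_rho_far iu iv uv) ?iv_adj.
- have vu : v != u by rewrite eq_sym.
  by apply: edge => //; rewrite adjC -(adj_rho_far iv iu vu) ?iu_adj // adjC.
- have Ciu : C a i u = 0 by apply: cartan_eq0_nadj; rewrite ?iu_adj.
  have Civ : C a i v = 0 by apply: cartan_eq0_nadj; rewrite ?iv_adj.
  apply: edge => //; move: uv_adj.
  by rewrite /dyn_adj (cartan_orth_rho iu iv uv Ciu Civ).
Qed.

Lemma sub_connected_rho (a : A) (i : I) (S : {set I}) :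
  i \in S -> sub_connected C a S -> sub_connected C (rho i a) S.
Proof.
move=> iS /forallP conn_a; apply/forallP => x; apply/implyP => xS.
apply/forallP => y; apply/implyP => yS.
move: (conn_a x) => /implyP /(_ xS) /forallP /(_ y) /implyP /(_ yS).
apply: connect_sub => u w /and3P [uS wS uw_adj].
exact: adj_connect_rho.
Qed.

End ReflectionInvariance.

Theorem lemma3p7 (I : finType) (A : Type) (rho : I -> A -> A)
  (C : A -> I -> I -> int)
  (HC : cartan_scheme rho C)
  (Hconn : cs_connected rho)
  (Hsc : cs_simply_connected rho C)
  (Hfin : finite_root_system rho C)
  (a : A) (i : I) :
  (forall l : seq I,
     sub_connected C a [set x | x \in i :: l] <->
     sub_connected C (rho i a) [set x | x \in i :: l]) /\
  (forall j k : I, i != j -> i != k -> j != k ->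
     ~~ dyn_adj C a i j -> ~~ dyn_adj C a i k ->
     C a j k = C (rho i a) j k /\ C a k j = C (rho i a) k j) /\
  (forall j k : I, i != j -> i != k -> j != k ->
     dyn_adj C a i j -> ~~ dyn_adj C a i k ->
     (dyn_adj C a j k <-> dyn_adj C (rho i a) j k)).
Proof.
case: Hfin => _ root_sign _.
split; [|split].
- move=> l; have iS : i \in [set x | x \in i :: l] by rewrite inE mem_head.
  split; first exact: sub_connected_rho.
  by move/(sub_connected_rho HC root_sign iS); rewrite (rhoK HC).
- move=> j k ij ik jk nij nik.
  have Cij := cartan_eq0_nadj ij nij; have Cik := cartan_eq0_nadj ik nik.
  have kj : k != j by rewrite eq_sym.
  by split; apply: (cartan_orth_rho HC root_sign).
- exact: (adj_rho_far HC root_sign).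
Qed.
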